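(* Let $X\ge 0$ be a random variable with $\mathbb{E}X<\infty$ and distribution function $F_X$. The set $\mathcal{I}_c$, with the norm $\|I\|_1=\int_0^\infty |I(x)|\,dF_X(x)$ and modulo functions equal to $0$ $F_X$-almost everywhere, is a compact subset of the normed space $L^1(F_X)$.
   Context: $\mathcal{I}_c$ denotes the set of functions $I:[0,\infty)\to[0,\infty)$ with $0\le I(x)\le x$ for all $x \ge 0$ and $0 \le I(x)-I(y) \le x-y$ for all $0\le y\le x$. *)

From HB Require Import structures.
From mathcomp Require Import all_boot all_order all_algebra.
From mathcomp Require Import all_classical all_reals all_analysis.
Set Implicit Arguments. Unset Strict Implicit. Unset Printing Implicit Defensive.
Import Order.TTheory GRing.Theory Num.Theory.
Import numFieldNormedType.Exports.
Local Open Scope classical_set_scope.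
Local Open Scope ring_scope.

(* The class I_c of functions [0,oo) -> [0,oo); functions are represented as
   R -> R and only their values on [0,oo) matter. *)
Definition Ic (R : realType) : set (R -> R) :=
  [set I | (forall x : R, 0 <= x -> 0 <= I x <= x) /\
           (forall x y : R, 0 <= y -> y <= x -> 0 <= I x - I y <= x - y)].

Definition L1space (R : realType) (mu : {measure set R -> \bar R}) : set (R -> R) :=
  [set f : R -> R | measurable_fun `[0%R : R, +oo[%classic f /\
           (\int[mu]_(x in `[0%R : R, +oo[%classic) (`|f x|)%:E < +oo)%E].

Definition L1dist (R : realType) (mu : {measure set R -> \bar R}) (f g : R -> R)
  : \bar R := (\int[mu]_(x in `[0%R : R, +oo[%classic) (`|f x - g x|)%:E)%E.

(* Identifying functions
   equal mu-a.e. (i.e. passing to the normed quotient L^1(mu)) does not change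
   which sets of functions are open/compact, since the quotient map is open
   and onto. *)
Definition L1open (R : realType) (mu : {measure set R -> \bar R})
  (U : set (R -> R)) : Prop :=
  forall f, U f -> exists2 e : R, 0 < e &
    forall g, L1space mu g -> (L1dist mu f g < e%:E)%E -> U g.

Definition L1compact (R : realType) (mu : {measure set R -> \bar R})
  (S : set (R -> R)) : Prop :=
  S `<=` L1space mu /\
  forall (J : Type) (U : J -> set (R -> R)),
    (forall j, L1open mu (U j)) -> S `<=` \bigcup_j U j ->
    exists (n : nat) (h : 'I_n -> J), S `<=` \bigcup_k U (h k).

From HB Require Import structures.
From mathcomp Require Import all_boot all_order all_algebra.
From mathcomp Require Import all_classical all_reals all_analysis.
From mathcomp Require Import lra measurable_realfun.
Import Order.TTheory GRing.Theory Num.Theory.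
Import numFieldNormedType.Exports.
Local Open Scope classical_set_scope.
Local Open Scope ring_scope.
Set Implicit Arguments. Unset Strict Implicit. Unset Printing Implicit Defensive.

(* Every [I] in [I_c] is 1-Lipschitz with [0 <= I x <= x], so [|I - J| <= x],
   which is integrable.  Closeness of [I] and [J] on a finite grid of mesh [1/m]
   gives [|I - J| <= 3/m] on [[0, m]], so by dominated convergence it forces
   L^1-closeness: on [I_c] the L^1 topology is coarser than the pointwise one.
   Normalised to vanish on negative reals, [I_c] is a pointwise closed subset
   of the product of the segments [[0, x]], hence compact by Tychonoff, and
   every L^1-open cover of [I_c] has a finite subcover. *)

Section Ic_pointwise.
Variable R : realType.
Implicit Types (f g : R -> R) (x y : R).

Lemma Ic_bounds f x : Ic f -> 0 <= x -> 0 <= f x <= x.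
Proof. by case=> + _; apply. Qed.

Lemma Ic_increment f x y : Ic f -> 0 <= y -> y <= x -> 0 <= f x - f y <= x - y.
Proof. by case=> _; apply. Qed.

Lemma Ic_dist_le f g x : Ic f -> Ic g -> 0 <= x -> `|f x - g x| <= x.
Proof.
move=> If Ig x0; have /andP[? ?] := Ic_bounds If x0.
have /andP[? ?] := Ic_bounds Ig x0.
rewrite ler_norml; apply/andP; split; lra.
Qed.

Definition zext f x := if 0 <= x then f x else 0.

Lemma zext_nneg f x : 0 <= x -> zext f x = f x.
Proof. by rewrite /zext => ->. Qed.

Lemma zext_neg f x : x < 0 -> zext f x = 0.
Proof. by rewrite /zext leNgt => ->. Qed.

Lemma Ic_zext f : Ic f -> Ic (zext f).
Proof.
move=> If; split=> [x x0|x y y0 yx]; first by rewrite zext_nneg //; exact: Ic_bounds.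
rewrite (zext_nneg _ y0) (zext_nneg _ (le_trans y0 yx)); exact: Ic_increment.
Qed.

Lemma zext_lipschitz f x y : Ic f -> `|zext f x - zext f y| <= `|x - y|.
Proof.
move=> If; wlog yx : x y / y <= x.
  move=> H; have [/H//|/ltW/H] := leP y x.
  by rewrite distrC [X in _ <= X]distrC.
have [y0|y0] := leP 0 y.
  rewrite (zext_nneg _ y0) (zext_nneg _ (le_trans y0 yx)).
  have /andP[fxy0 fxyx] := Ic_increment If y0 yx.
  by rewrite (ger0_norm fxy0) ger0_norm // subr_ge0.
rewrite (zext_neg _ y0) subr0; have [x0|x0] := leP 0 x.
  have /andP[? ?] := Ic_bounds If x0.
  rewrite zext_nneg // !ger0_norm ?subr_ge0; lra.
by rewrite zext_neg // normr0.
Qed.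

Lemma zext_continuous f : Ic f -> continuous (zext f).
Proof.
move=> If x; apply/cvgrPdist_lt => e e0; near=> z.
apply: le_lt_trans (zext_lipschitz _ _ If) _.
by near: z; exact: cvgr_dist_lt.
Unshelve. all: by end_near.
Qed.

Lemma Ic_measurable f : Ic f -> measurable_fun `[0%R : R, +oo[ f.
Proof.
move=> If; apply: (eq_measurable_fun (zext f)).
  by move=> x; rewrite inE /= in_itv /= andbT => /zext_nneg.
exact: measurable_funS (continuous_measurable_fun (zext_continuous If)).
Qed.

(* The grid [k/m], [k <= m^2], has mesh [1/m] and spans [[0, m]]. *)
Definition grid_close f g (m : nat) :=
  forall k : 'I_(m * m).+1, `|f (k%:R / m%:R) - g (k%:R / m%:R)| < m%:R^-1.

(* [x] lies within [1/m] to the right of a grid point [k/m], and both [f] and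
   [g] increase by at most [1/m] from there. *)
Lemma grid_close_dist_le f g (m : nat) x : Ic f -> Ic g -> (0 < m)%N ->
  0 <= x < m%:R -> grid_close f g m -> `|f x - g x| <= 3 / m%:R.
Proof.
move=> If Ig m0 /andP[x0 xm] fg.
have m0' : 0 < (m%:R : R) by rewrite ltr0n.
have /andP[kx xk1] := truncn_itv (mulr_ge0 x0 (ltW m0')).
set k := Num.truncn (x * m%:R) in kx xk1.
have km : (k < (m * m).+1)%N.
  by rewrite ltnS -(ler_nat R) natrM (le_trans kx) // ltW // ltr_pM2r.
have := fg (Ordinal km); rewrite /= ltr_norml.
set y := k%:R / m%:R => /andP[fg1 fg2].
have y0 : 0 <= y by rewrite divr_ge0 // ltW.
have yx : y <= x by rewrite ler_pdivrMr.
have xy : x - y < m%:R^-1.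
  by rewrite ltrBlDl -[X in _ + X]mul1r -mulrDl natr1 ltr_pdivlMr.
have /andP[? ?] := Ic_increment If y0 yx.
have /andP[? ?] := Ic_increment Ig y0 yx.
clearbody y; set t := m%:R^-1 in xy fg1 fg2 *.
rewrite ler_norml; apply/andP; split; lra.
Qed.

End Ic_pointwise.

Section L1_distance.
Variables (R : realType) (mu : {measure set R -> \bar R}).
Local Notation D := (`[0%R : R, +oo[%classic).
Hypothesis mu_first_moment : (\int[mu]_(x in D) x%:E < +oo)%E.

Lemma ge0_itv_ge0 x : D x -> 0 <= x.
Proof. by rewrite /= in_itv /= andbT. Qed.

Lemma integrable_itv_ge0_id : mu.-integrable D EFin.
Proof.
apply/integrableP; split; first by apply/measurable_EFinP; exact: measurable_id.
rewrite (eq_integral (fun x => x%:E)) // => x /[!inE] /ge0_itv_ge0 x0.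
by rewrite abse_EFin ger0_norm.
Qed.

Lemma Ic_L1space f : Ic f -> L1space mu f.
Proof.
move=> If; split; first exact: Ic_measurable.
apply: le_lt_trans mu_first_moment; apply: (ge0_le_integral mu) => //.
- apply/measurable_EFinP.
  exact: measurableT_comp (@normr_measurable R setT) (Ic_measurable If).
- move=> x /ge0_itv_ge0 x0; have /andP[? ?] := Ic_bounds If x0.
  by rewrite lee_fin ger0_norm.
Qed.

(* The integrands [|f - g_ n|] are dominated by [x], and on [0, n.+1) they are
   bounded by [3/n.+1]. *)
Lemma grid_close_L1dist_cvg0 f (g_ : nat -> R -> R) :
  Ic f -> (forall n, Ic (g_ n)) -> (forall n, grid_close f (g_ n) n.+1) ->
  (L1dist mu f (g_ n) @[n --> \oo] --> 0%E).
Proof.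
move=> If Ig fg; pose h n x := (`|f x - g_ n x|)%:E.
have mh n : measurable_fun D (h n).
  apply/measurable_EFinP; apply: measurableT_comp (@normr_measurable R setT) _.
  exact: measurable_funB (Ic_measurable If) (Ic_measurable (Ig n)).
have h_cvg0 : {ae mu, forall x, D x -> h n x @[n --> \oo] --> 0%E}.
  apply: aeW => x /ge0_itv_ge0 x0; apply/fine_cvgP; split; first by near=> n.
  have bnd_cvg0 : 3 / (n.+1%:R : R) @[n --> \oo] --> 0.
    by rewrite -(mulr0 3); apply: cvgM cvg_harmonic; exact: cvg_cst.
  apply: squeeze_cvgr (cvg_cst 0) bnd_cvg0; near=> n.
  rewrite /= normr_ge0 /=; apply: grid_close_dist_le => //.
  rewrite x0 /=; near: n; exists (Num.truncn x) => // n /= xn.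
  have /andP[_ xlt] := truncn_itv x0.
  by rewrite (lt_le_trans xlt) // ler_nat ltnS.
have h_dom : {ae mu, forall x n, D x -> (`|h n x| <= x%:E)%E}.
  apply: aeW => x n /ge0_itv_ge0 x0.
  by rewrite abse_EFin lee_fin normr_id Ic_dist_le.
have [_ _] := dominated_convergence (measurable_itv _) mh (measurable_cst _)
  h_cvg0 integrable_itv_ge0_id h_dom.
by rewrite integral0.
Unshelve. all: by end_near.
Qed.

Lemma grid_close_L1dist_lt f e : Ic f -> 0 < e ->
  exists2 m : nat, (0 < m)%N &
    forall g, Ic g -> grid_close f g m -> (L1dist mu f g < e%:E)%E.
Proof.
move=> If e0; apply: contrapT => no_grid.
have far n : exists g, [/\ Ic g, grid_close f g n.+1 & (e%:E <= L1dist mu f g)%E].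
  apply: contrapT => no_far; apply: no_grid; exists n.+1 => // g Ig fg.
  by rewrite ltNge; apply/negP => ge; apply: no_far; exists g.
have [g_ /all_and3[Ig_ fg_ far_]] := choice far.
have /(_ _ (nbhs_open_ereal_lt (f := fun=> e) e0)) := grid_close_L1dist_cvg0 If Ig_ fg_.
case=> N _ /(_ N (leqnn N)) /=.
by rewrite ltNge far_.
Qed.

End L1_distance.

Section pointwise_compactness.
Variable R : realType.

Definition Ic0 : set {ptws R -> R} := [set f | Ic f /\ forall x, x < 0 -> f x = 0].

Lemma closed_increment_itv (a b : R) :
  closed [set f : {ptws R -> R} | 0 <= f a - f b <= a - b].
Proof.
have -> : [set f : {ptws R -> R} | 0 <= f a - f b <= a - b] =
    (fun f : {ptws R -> R} => f a - f b) @^-1` `[0, a - b].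
  by apply/seteqP; split => f /=; rewrite in_itv.
apply: preimage_closed; last exact: itv_closed.
move=> f _; have proj := @proj_continuous R (fun=> R).
exact: (@cvgB _ _ _ _ (nbhs_filter f) _ _ _ _ (proj a f) (proj b f)).
Qed.

(* [Ic0] is a closed subset of the Tychonoff product of the segments [[0, x]]. *)
Lemma Ic0_compact : compact Ic0.
Proof.
pose box := [set f : {ptws R -> R} | forall x, `[0, Num.max 0 x]%classic (f x)].
pose lip := \bigcap_(p in [set p : R * R | 0 <= p.2 <= p.1])
  [set f : {ptws R -> R} | 0 <= f p.1 - f p.2 <= p.1 - p.2].
have -> : Ic0 = box `&` lip.
  apply/seteqP; split => f; rewrite /box /lip /=.
    move=> [If f_neg]; split=> [x|[a b] /= /andP[b0 ba]]; last exact: Ic_increment.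
    rewrite in_itv /=; have [x0|x0] := leP 0 x; first exact: Ic_bounds.
    by rewrite f_neg // lexx.
  move=> [f_box f_lip]; split; first split.
  - by move=> x x0; have := f_box x; rewrite in_itv /= (max_r x0).
  - by move=> x y y0 yx; apply: (f_lip (x, y)) => /=; rewrite y0 yx.
  - move=> x x0; have := f_box x; rewrite in_itv /= (max_l (ltW x0)).
    by move=> fx; apply/eqP; rewrite eq_le andbC.
apply: compact_closedI.
  exact: (@tychonoff R (fun=> R) _ (fun x => @segment_compact R 0 (Num.max 0 x))).
by apply: closed_bigI => p _; exact: closed_increment_itv.
Qed.

End pointwise_compactness.

Section L1_compactness.
Variable R : realType.
(* [compact_cover] needs a pointed space. *)
HB.instance Definition _ := Pointed.copy {ptws R -> R} (R -> R).
Variable mu : {measure set R -> \bar R}.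
Hypothesis mu_first_moment : (\int[mu]_(x in `[0%R : R, +oo[) x%:E < +oo)%E.

Lemma Ic_L1dist_near (f : {ptws R -> R}) e : Ic f -> 0 < e ->
  \forall g \near f, Ic g -> (L1dist mu f g < e%:E)%E.
Proof.
move=> If e0; have [m m0 grid_lt] := grid_close_L1dist_lt mu_first_moment If e0.
have mV0 : 0 < (m%:R : R)^-1 by rewrite invr_gt0 ltr0n.
have near_grid : \forall g \near f, grid_close f g m.
  apply: (filter_forall (nbhs_filter f)) => k.
  have proj := @proj_continuous R (fun=> R) (k%:R / m%:R) f.
  exact: (@cvgr_dist_lt _ _ _ _ (nbhs_filter f) _ _ proj _ mV0).
apply: (@filterS _ _ (nbhs_filter f) _ _ _ near_grid) => g fg Ig.
exact: grid_lt.
Qed.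

Lemma L1dist_zext (f : R -> R) : L1dist mu (zext f) f = 0%E.
Proof.
rewrite /L1dist (eq_integral (cst 0%E)) ?integral0 // => x /[!inE] /ge0_itv_ge0 x0.
by rewrite zext_nneg // subrr normr0.
Qed.

Lemma L1compact_Ic : L1compact mu (@Ic R).
Proof.
split=> [f|J U U_open Ic_cover]; first exact: Ic_L1space.
pose W (j : {classic J}) : set {ptws R -> R} := interior [set g | Ic0 g -> U j g].
have := @Ic0_compact R; rewrite compact_cover => /(_ {classic J} setT W).
case=> [j _|f [If _]|F _ F_cover]; first exact: open_interior.
  have [j _ Ujf] := Ic_cover f If.
  exists j => //; have [e e0 ball_Uj] := U_open j f Ujf.
  apply: (@filterS _ _ (nbhs_filter f) _ _ _ (Ic_L1dist_near If e0)) => g near_g [Ig _].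
  exact: ball_Uj (Ic_L1space mu_first_moment Ig) (near_g Ig).
pose s := finmap.enum_fset F.
exists (size s), (fun k => tnth (in_tuple s) k) => f If.
have Ic0f : Ic0 (zext f) by split=> [|x x0]; [exact: Ic_zext | exact: zext_neg].
have [j Fj /interior_subset /(_ Ic0f) Ujf] := F_cover _ Ic0f.
have [e e0 ball_Uj] := U_open j _ Ujf.
have js : (index j s < size s)%N by rewrite index_mem.
exists (Ordinal js) => //=; rewrite (tnth_nth j) /= nth_index //.
by apply: ball_Uj; [exact: Ic_L1space | rewrite L1dist_zext lte_fin].
Qed.

End L1_compactness.

Lemma integral_itv_ge0_distribution_le_expectation d (T : measurableType d)
    (R : realType) (P : probability T R) (X : {RV P >-> R}) :
  (forall w, 0 <= X w) ->
  (\int[distribution P X]_(x in `[0%R : R, +oo[) x%:E <= 'E_P[X])%E.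
Proof.
move=> X0; have mnorm : measurable_fun setT (fun x : R => (`|x|)%:E).
  by apply/measurable_EFinP; exact: normr_measurable.
rewrite (@eq_integral _ _ _ _ _ (fun x : R => (`|x|)%:E)); last first.
  by move=> x /[!inE] /ge0_itv_ge0 x0; rewrite ger0_norm.
apply: le_trans (ge0_subset_integral _ (measurable_itv _) _ mnorm _ _) _ => //.
rewrite ge0_integral_distribution // unlock (eq_integral (fun w => (X w)%:E)) //.
by move=> w _ /=; rewrite ger0_norm.
Qed.

Theorem lemma2p3 (d : measure_display) (T : measurableType d) (R : realType)
  (P : probability T R) (X : {RV P >-> R}) :
  (forall w, 0 <= X w) -> ('E_P[X] < +oo)%E ->
  L1compact (distribution P X) (@Ic R).
Proof.
move=> X0 EX; apply: L1compact_Ic.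
exact: le_lt_trans (integral_itv_ge0_distribution_le_expectation X0) EX.
Qed.
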